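(* Let $G$ be a finite simple graph with $n$ vertices and minimum degree $\delta$, and let $k$ be a positive integer. Then $\gamma_{gr}^{t,k}(G)\leq n-\delta+k$ and $\gamma_{gr}^{Z,k}(G)\leq\gamma_{gr}^{k}(G)\leq n-\delta+k-1$.
   Context: For a vertex $v$, $N(v)$ is its open neighborhood and $N[v]=N(v)\cup\{v\}$. A sequence $S=(v_1,\ldots,v_m)$ of distinct vertices is a $k$-sequence (resp. $k$-$Z$-sequence, $k$-$t$-sequence) if for each $i\in[m]$ there is a vertex $u_i$ with $u_i\in N[v_i]$ (resp. $N(v_i)$, $N(v_i)$) such that the number of indices $j<i$ with $u_i\in N[v_j]$ (resp. $N[v_j]$, $N(v_j)$) is less than $k$. The numbers $\gamma_{gr}^{k}(G)$, $\gamma_{gr}^{Z,k}(G)$, $\gamma_{gr}^{t,k}(G)$ are the maximum lengths of a $k$-sequence, $k$-$Z$-sequence, $k$-$t$-sequence of $G$, respectively. *)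

From mathcomp Require Import all_boot.
Set Implicit Arguments. Unset Strict Implicit. Unset Printing Implicit Defensive.

Definition simple_graph (T : finType) (e : rel T) : Prop :=
  symmetric e /\ irreflexive e.

Definition onbhd (T : finType) (e : rel T) (v : T) : {set T} := [set u | e v u].
Definition cnbhd (T : finType) (e : rel T) (v : T) : {set T} := v |: onbhd e v.

Definition deg (T : finType) (e : rel T) (v : T) : nat := #|onbhd e v|.

Definition is_min_degree (T : finType) (e : rel T) (delta : nat) : Prop :=
  (exists v, deg e v = delta) /\ (forall v, delta <= deg e v).

Definition gen_seq (T : finType) (A B : T -> {set T}) (k : nat) (m : nat)
  (s : m.-tuple T) : bool :=
  uniq s &&
  [forall i : 'I_m, [exists u in A (tnth s i),
      count (fun w => u \in B w) (take i s) < k]].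

(* maximum length of a sequence satisfying gen_seq (distinctness bounds the
   length by #|T|; the empty sequence always qualifies) *)
Definition gen_gr (T : finType) (A B : T -> {set T}) (k : nat) : nat :=
  \max_(m < #|T|.+1 | [exists s : m.-tuple T, gen_seq A B k s]) m.

Definition gamma_gr_k (T : finType) (e : rel T) (k : nat) : nat :=
  gen_gr (cnbhd e) (cnbhd e) k.
Definition gamma_gr_Zk (T : finType) (e : rel T) (k : nat) : nat :=
  gen_gr (onbhd e) (cnbhd e) k.
Definition gamma_gr_tk (T : finType) (e : rel T) (k : nat) : nat :=
  gen_gr (onbhd e) (onbhd e) k.

From mathcomp Require Import all_boot.
From mathcomp Require Import zify.

Set Implicit Arguments.
Unset Strict Implicit.

(* The vertex [u] witnessing the last position of a sequence of length [m]
   lies in [B w] for fewer than [k] of the [m - 1] earlier, distinct, vertices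
   [w]; all the others avoid it, so [m - 1 < k + #{w | u \notin B w}].  By
   symmetry of [e] that set is the complement of [N(u)] or of [N[u]], hence
   has at most [n - delta] or [n - delta - 1] elements. *)

Section GenSeq.

Variables (T : finType) (A B : T -> {set T}) (k : nat).

Lemma gen_seq_position_bound m (s : m.-tuple T) (i : 'I_m) :
  gen_seq A B k s ->
  exists2 u, u \in A (tnth s i) & i < k + #|[set w | u \notin B w]|.
Proof.
case/andP=> uniq_s /forallP/(_ i)/exists_inP[u Au count_lt_k].
exists u => //.
set p := fun w => u \in B w.
have size_prefix : size (take i s) = i by rewrite size_take size_tuple ltn_ord.
have count_notin : count (predC p) (take i s) <= #|[set w | u \notin B w]|.
  rewrite -size_filter cardE; apply: uniq_leq_size.
    by rewrite filter_uniq // take_uniq.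
  by move=> w; rewrite mem_filter mem_enum => /andP[u_notin _]; rewrite inE.
by rewrite -{1}size_prefix -(count_predC p) -addSn leq_add.
Qed.

Lemma gen_gr_le_add c :
  (forall u, #|[set w | u \notin B w]| <= c) -> gen_gr A B k <= k + c.
Proof.
move=> card_le_c; apply/bigmax_leqP => [[m _]] /= /existsP[s gen_s].
case: m s gen_s => [// | m] s gen_s.
have [u _ last_lt] := gen_seq_position_bound ord_max gen_s.
exact: leq_trans last_lt (leq_add (leqnn k) (card_le_c u)).
Qed.

Lemma gen_gr_subset (A' : T -> {set T}) :
  (forall v, A v \subset A' v) -> gen_gr A B k <= gen_gr A' B k.
Proof.
move=> subA; apply/bigmax_leqP => m /existsP[s /andP[uniq_s witness_s]].
apply: leq_bigmax_cond; apply/existsP; exists s; rewrite /gen_seq uniq_s /=.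
apply/forallP => i; have /exists_inP[u Au count_lt_k] := forallP witness_s i.
by apply/exists_inP; exists u => //; apply: subsetP Au.
Qed.

End GenSeq.

Section SimpleGraph.

Variables (T : finType) (e : rel T).
Hypotheses (e_sym : symmetric e) (e_irr : irreflexive e).

Lemma card_notin_onbhd u :
  #|[set w | u \notin onbhd e w]| = #|T| - deg e u.
Proof.
suff -> : [set w | u \notin onbhd e w] = ~: onbhd e u by rewrite cardsCs setCK.
by apply/setP => w; rewrite !inE e_sym.
Qed.

Lemma card_cnbhd v : #|cnbhd e v| = (deg e v).+1.
Proof. by rewrite cardsU1 inE e_irr. Qed.

Lemma card_notin_cnbhd u :
  #|[set w | u \notin cnbhd e w]| = #|T| - (deg e u).+1.
Proof.
suff -> : [set w | u \notin cnbhd e w] = ~: cnbhd e u.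
  by rewrite cardsCs setCK card_cnbhd.
by apply/setP => w; rewrite !inE e_sym eq_sym.
Qed.

Lemma deg_lt_card v : deg e v < #|T|.
Proof. by rewrite -card_cnbhd max_card. Qed.

End SimpleGraph.

Theorem mainTheorem3 (T : finType) (e : rel T) (delta k : nat) :
  simple_graph e -> is_min_degree e delta -> 0 < k ->
  gamma_gr_tk e k <= #|T| - delta + k /\
  gamma_gr_Zk e k <= gamma_gr_k e k /\
  gamma_gr_k e k <= #|T| - delta + k - 1.
Proof.
move=> [e_sym e_irr] [[v deg_v] delta_le_deg] _.
have delta_lt_n : delta < #|T| by rewrite -deg_v deg_lt_card.
split; last split.
- rewrite addnC; apply: gen_gr_le_add => u.
  by rewrite card_notin_onbhd //; apply/leq_sub2l/delta_le_deg.
- by apply: gen_gr_subset => u; apply: subsetUr.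
- have card_le u : #|[set w | u \notin cnbhd e w]| <= #|T| - delta.+1.
    by rewrite card_notin_cnbhd //; apply/leq_sub2l/delta_le_deg.
  apply: leq_trans (gen_gr_le_add (cnbhd e) k card_le) _; lia.
Qed.
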